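(* Let $\Sigma\in\mathcal{G}_n$, $W=W(\Sigma)$, and let $Q_0$ be the unique regular rational orthogonal matrix with $Q_0^{\rm T}S(\Sigma)Q_0=S(\Sigma^{\rm T})$, with level $\ell_0$. Let $p$ be an odd prime with $p\nmid\ell_0$. If $z$ is an integral vector with $z\not\equiv0\pmod p$ and $W^{\rm T}z\equiv0\pmod p$, then $z^{\rm T}z\not\equiv0\pmod p$.
   Context: An oriented graph on vertices $v_1,\dots,v_n$ is a simple graph with each edge directed; its skew-adjacency matrix $S(\Sigma)=(s_{ij})$ has $s_{ij}=1$ if $(v_i,v_j)$ is an arc, $-1$ if $(v_j,v_i)$ is an arc, $0$ otherwise. The converse $\Sigma^{\rm T}$ reverses every arc, so $S(\Sigma^{\rm T})=-S(\Sigma)$. With $e$ the all-one vector, $W(\Sigma)=[e,Se,\dots,S^{n-1}e]$, $S=S(\Sigma)$. $\mathcal{G}_n$ is the set of $n$-vertex oriented graphs with $2^{-\lfloor n/2\rfloor}\det W(\Sigma)$ an odd square-free integer. A rational orthogonal matrix $Q$ is regular if $Qe=e$; its level is the least positive integer $k$ with $kQ$ integral. Since $\det W(\Sigma)\ne0$, $Q_0$ exists and is unique. *)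

From mathcomp Require Import all_boot all_order all_algebra.
Set Implicit Arguments. Unset Strict Implicit. Unset Printing Implicit Defensive.
Import Order.TTheory GRing.Theory Num.Theory.
Local Open Scope ring_scope.

(* An oriented graph on vertices 'I_n is given by its arc relation [arc]:
   [arc i j] means (v_i, v_j) is an arc. Simple + oriented: no loops and
   at most one direction per pair. *)
Definition oriented_graph (n : nat) (arc : rel 'I_n) : Prop :=
  forall i j, ~~ (arc i j && arc j i).

Definition skewadj (n : nat) (arc : rel 'I_n) : 'M[int]_n :=
  \matrix_(i, j) ((arc i j)%:Z - (arc j i)%:Z).

Definition onev (R : nzRingType) (n : nat) : 'cV[R]_n := const_mx 1.

Definition walkmx (n : nat) (S : 'M[int]_n) : 'M[int]_n :=
  \matrix_(i, k) ((S ^+ k) *m onev int n) i 0.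

Definition squarefree_nat (m : nat) : bool :=
  [forall p : 'I_m.+1, prime p ==> ~~ (p ^ 2 %| m)%N].

Definition in_Gn (n : nat) (arc : rel 'I_n) : Prop :=
  exists m : int,
    \det (walkmx (skewadj arc)) = (2 ^+ n./2) * m /\ odd `|m|%N /\ squarefree_nat `|m|%N.

Definition ratmx (n : nat) (A : 'M[int]_n) : 'M[rat]_n := map_mx (fun x => x%:~R) A.

Definition orthogonal_mx (n : nat) (Q : 'M[rat]_n) : Prop := Q^T *m Q = 1%:M.
Definition regular_mx (n : nat) (Q : 'M[rat]_n) : Prop := Q *m onev rat n = onev rat n.

Definition integral_mx (n : nat) (A : 'M[rat]_n) : Prop :=
  forall i j, A i j \is a Num.int.

Definition is_level (n : nat) (Q : 'M[rat]_n) (l : nat) : Prop :=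
  (0 < l)%N /\ integral_mx (l%:R *: Q) /\
  forall k : nat, (0 < k)%N -> integral_mx (k%:R *: Q) -> (l <= k)%N.

From mathcomp Require Import all_boot all_order all_algebra.
From mathcomp Require Import zify.
Set Implicit Arguments. Unset Strict Implicit. Unset Printing Implicit Defensive.
Import Order.TTheory GRing.Theory Num.Theory.
Local Open Scope ring_scope.

(* Reduce modulo p.  Since p does not divide the level l0, Q0 has a reduction
   Q over F_p.  Over Q, the relations Q0^T S Q0 = -S and Q0 e = e give
   W^T Q0 = D W^T and, W being invertible, adj(W) Q0 = D adj(W), where W is the
   walk matrix and D = diag((-1)^k); both relations survive reduction mod p.
   As p^2 does not divide det W, W has rank at least n - 1 mod p, so when
   z^T W = 0 with z nonzero mod p, the left kernel of W is the line through z^T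
   and the walk vectors (S^k e)^T, k < n - 1, are independent.  If moreover
   z^T z = 0, then z^T is a combination of these n - 1 vectors.  The last row of
   adj(W) also spans the left kernel, which gives z^T Q = (-1)^(n-1) z^T: only
   indices k of the parity of n - 1 occur.  The vector z^T S^T lies in the left
   kernel as well, but in the opposite eigenspace of Q, hence z^T S^T = 0; this is
   a linear dependency among the (S^k e)^T, 1 <= k < n - 1, forcing z = 0. *)

Section LinearAlgebra.
Variable F : fieldType.

Lemma mxrank_ker_cV n (z : 'cV[F]_n) : z != 0 -> \rank (kermx z) = n.-1.
Proof.
by move=> nz_z; rewrite mxrank_ker -mxrank_tr rank_rV trmx_eq0 nz_z subn1.
Qed.

Lemma mxrank_mul_cV0 k n (B : 'M[F]_(k, n)) (z : 'cV_n) :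
  z != 0 -> B *m z = 0 -> (\rank B <= n.-1)%N.
Proof. by move=> nz_z /sub_kermxP/mxrankS; rewrite mxrank_ker_cV. Qed.

Lemma isotropic_cV_sub k n (B : 'M[F]_(k, n)) (z : 'cV_n) :
  z != 0 -> \rank B = n.-1 -> B *m z = 0 -> z^T *m z = 0 -> (z^T <= B)%MS.
Proof.
move=> nz_z rank_B /sub_kermxP sub_B /sub_kermxP z_ker; apply: submx_trans z_ker _.
by rewrite -(mxrank_leqif_sup sub_B).2 rank_B mxrank_ker_cV.
Qed.

Lemma corank1_ker_sub n k (A : 'M[F]_(n, k)) (u y : 'rV_n) :
  \rank A = n.-1 -> u != 0 -> u *m A = 0 -> y *m A = 0 -> (y <= u)%MS.
Proof.
move=> rank_A nz_u /sub_kermxP u_ker /sub_kermxP y_ker; apply: submx_trans y_ker _.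
have := mxrankS u_ker; rewrite -(mxrank_leqif_sup u_ker).2 rank_rV nz_u mxrank_ker rank_A.
by lia.
Qed.

Lemma eqNr_eq0 (V : lmodType F) (v : V) : (2 : F) != 0 -> v = - v -> v = 0.
Proof.
move=> two_neq0 /eqP; rewrite -addr_eq0 -mulr2n -scaler_nat scaler_eq0 (negbTE two_neq0).
by move/eqP.
Qed.

Lemma adj_conj n (A P D : 'M[F]_n) :
  A \in unitmx -> P *m A = A *m D -> \adj A *m P = D *m \adj A.
Proof.
move=> unit_A PA; apply: (can_inj (mulmxK unit_A)) => /=.
by rewrite -!mulmxA PA mul_adj_mx mulmxA mul_adj_mx mul_scalar_mx mul_mx_scalar.
Qed.

Lemma mul_diag_rowsP m n (A : 'M[F]_(m, n)) (P : 'M_n) (d : 'rV_m) :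
  A *m P = diag_mx d *m A <-> forall k, row k A *m P = d 0 k *: row k A.
Proof.
have rowD k : row k (diag_mx d *m A) = d 0 k *: row k A.
  by rewrite row_mul row_diag_mx -scalemxAl -rowE.
split=> [AP k | rowsP]; first by rewrite -row_mul AP rowD.
by apply/row_matrixP => k; rewrite row_mul rowsP rowD.
Qed.

Lemma adj_row_neq0 n (A : 'M[F]_n.+1) j : \rank (col' j A) = n -> row j (\adj A) != 0.
Proof.
move=> rank_A; apply/eqP => adj_j0.
(* Replacing column j of A by any x then gives a singular matrix, so every x
   lies in the column space of col' j A, which has dimension n only. *)
pose B (x : 'cV_n.+1) : 'M_n.+1 := \matrix_(r, c) if c == j then x r 0 else A r c.
have col'_B x : col' j (B x) = col' j A.
  by apply/matrixP => r c; rewrite !mxE eq_sym (negbTE (neq_lift j c)).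
have det_B x : \det (B x) = 0.
  rewrite (expand_det_col _ j); transitivity ((row j (\adj A) *m x) 0 0).
    by rewrite mxE; apply: eq_bigr => r _; rewrite !mxE eqxx mulrC /cofactor col'_B.
  by rewrite adj_j0 mul0mx mxE.
have sub_col' (x : 'cV_n.+1) : (x^T <= (col' j A)^T)%MS.
  have sub_B : ((col' j A)^T <= (B x)^T)%MS.
    apply/row_subP => k; have -> : row k (col' j A)^T = row (lift j k) (B x)^T.
      by apply/rowP => c; rewrite !mxE eq_sym (negbTE (neq_lift j k)).
    exact: row_sub.
  have sing_B : ~~ row_free (B x)^T.
    by rewrite row_free_unit unitmxE det_tr det_B unitr0.
  have B_sub : ((B x)^T <= (col' j A)^T)%MS.
    rewrite -(mxrank_leqif_sup sub_B).2; move: sing_B (mxrankS sub_B) (rank_leq_row (B x)^T).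
    by rewrite /row_free !mxrank_tr rank_A; lia.
  apply: submx_trans B_sub; have -> : x^T = row j (B x)^T by apply/rowP => c; rewrite !mxE eqxx.
  exact: row_sub.
have sub1 : (1%:M <= (col' j A)^T)%MS.
  by apply/row_subP => i; rewrite -trmx1 -tr_col sub_col'.
by have := mxrankS sub1; rewrite mxrank1 mxrank_tr rank_A ltnn.
Qed.

End LinearAlgebra.

Definition sgn_diag (R : pzRingType) n : 'M[R]_n := diag_mx (\row_(i < n) (-1) ^+ i).

Definition krylov (R : pzRingType) n (A : 'M[R]_n) (x : 'cV[R]_n) j : 'M[R]_(j, n) :=
  \matrix_(k < j) (A ^+ k *m x)^T.

Lemma map_krylov (R R' : nzRingType) (f : {rmorphism R -> R'}) n (A : 'M[R]_n) x j :
  map_mx f (krylov A x j) = krylov (map_mx f A) (map_mx f x) j.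
Proof. by apply/row_matrixP => k; rewrite -map_row !rowK -map_trmx map_mxM rmorphXn. Qed.

Lemma map_sgn_diag (R R' : nzRingType) (f : {rmorphism R -> R'}) n :
  map_mx f (sgn_diag R n) = sgn_diag R' n.
Proof. by rewrite map_diag_mx; congr diag_mx; apply/rowP => i; rewrite !mxE rmorph_sign. Qed.

Lemma map_onev (R R' : nzRingType) (f : {rmorphism R -> R'}) n :
  map_mx f (onev R n) = onev R' n.
Proof. by rewrite map_const_mx rmorph1. Qed.

Section Krylov.
Variables (F : fieldType) (n : nat) (A : 'M[F]_n) (x : 'cV[F]_n).
Local Notation krylov := (krylov A x).

Lemma krylov_vec_sub j k : (k < j)%N -> ((A ^+ k *m x)^T <= krylov j)%MS.
Proof. by move=> lt_kj; have := row_sub (Ordinal lt_kj) (krylov j); rewrite rowK. Qed.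

Lemma krylov_vecS k : (A ^+ k *m x)^T *m A^T = (A ^+ k.+1 *m x)^T.
Proof. by rewrite -trmx_mul mulmxA mulmxE -exprS. Qed.

Lemma krylov_subS j : (krylov j <= krylov j.+1)%MS.
Proof. by apply/row_subP => k; rewrite rowK krylov_vec_sub // ltnS ltnW. Qed.

Lemma krylov_mul j : (krylov j *m A^T <= krylov j.+1)%MS.
Proof.
by apply/row_subP => k; rewrite row_mul rowK krylov_vecS krylov_vec_sub ?ltnS.
Qed.

Lemma krylov_stable j :
  \rank (krylov j.+1) = \rank (krylov j) -> forall i, (krylov i <= krylov j)%MS.
Proof.
move=> eq_rank i.
have sub_j : (krylov j.+1 <= krylov j)%MS.
  by rewrite -(mxrank_leqif_sup (krylov_subS j)).2 eq_rank.
have inv_j : (krylov j *m A^T <= krylov j)%MS := submx_trans (krylov_mul j) sub_j.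
have vec_sub k : ((A ^+ k *m x)^T <= krylov j)%MS.
  elim: k => [|k IHk]; first exact: submx_trans (krylov_vec_sub (ltn0Sn j)) sub_j.
  by rewrite -krylov_vecS; apply: submx_trans (submxMr _ IHk) inv_j.
by apply/row_subP => k; rewrite rowK.
Qed.

Lemma row_free_krylov j N : (j <= \rank (krylov N))%N -> row_free (krylov j).
Proof.
elim: j => [|j IHj] le_jN; first by rewrite /row_free -leqn0 rank_leq_row.
have /eqP rank_j := IHj (ltnW le_jN).
rewrite /row_free eqn_leq rank_leq_row leqNgt; apply/negP => lt_rank.
have eq_rank : \rank (krylov j.+1) = \rank (krylov j).
  by apply/eqP; rewrite eqn_leq (mxrankS (krylov_subS _)) andbT rank_j -ltnS.
by have := mxrankS (krylov_stable eq_rank N); rewrite rank_j; lia.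
Qed.

Lemma row_free_krylov_mul j : row_free (krylov j.+1) -> row_free (krylov j *m A^T).
Proof.
move=> /eqP free_j; have sub_adds : (krylov j.+1 <= x^T + krylov j *m A^T)%MS.
  apply/row_subP => -[[|k] lt_k]; rewrite rowK.
    by rewrite expr0 mul1mx addsmxSl.
  apply: submx_trans (addsmxSr _ _); rewrite -krylov_vecS.
  by have := row_sub (Ordinal (lt_k : (k < j)%N)) (krylov j *m A^T); rewrite row_mul rowK.
have := leq_trans (mxrankS sub_adds) (mxrank_adds_leqif _ _).1.
have := rank_leq_row x^T; have := rank_leq_row (krylov j *m A^T).
by rewrite free_j /row_free; lia.
Qed.

Lemma row'_krylov j : row' ord_max (krylov j.+1) = krylov j.
Proof. by apply/matrixP => k i; rewrite !mxE lift_max. Qed.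

Lemma krylov_coef_last0 j (a : 'rV_j.+1) :
  a 0 ord_max = 0 -> (a *m krylov j.+1 <= krylov j)%MS.
Proof.
move=> a_max; rewrite mulmx_sum_row; apply/summx_sub => k _.
case: (unliftP ord_max k) => [k'|] ->; last by rewrite a_max scale0r sub0mx.
by rewrite scalemx_sub // rowK krylov_vec_sub // lift_max.
Qed.

Lemma krylov_mul_ker j (u : 'rV_n) :
  row_free (krylov j.+1) -> (u <= krylov j)%MS -> u *m A^T = 0 -> u = 0.
Proof.
move=> /row_free_krylov_mul free_j /submxP[b ->]; rewrite -mulmxA => b0.
by rewrite (row_free_inj free_j (etrans b0 (esym (mul0mx _ _)))) mul0mx.
Qed.

Lemma krylov_sgn_mul_ker j (a : 'rV_j) : (2 : F) != 0 -> row_free (krylov j) ->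
  a *m sgn_diag F j = (-1) ^+ j *: a -> a *m krylov j *m A^T = 0 -> a *m krylov j = 0.
Proof.
case: j a => [|j] a two_neq0 free_j a_sgn aA0; first by rewrite [a]thinmx0 mul0mx.
(* The sign condition kills the last coefficient, so that the product with A^T
   is a dependency among the free rows (A^k x)^T, 0 < k <= j. *)
have a_max : a 0 ord_max = 0.
  have := congr1 (fun b : 'rV_j.+1 => b 0 ord_max) a_sgn.
  rewrite mul_mx_diag !mxE /= exprS mulN1r mulNr [_ * a 0 _]mulrC => /(@eqNr_eq0 _ F^o).
  by move/(_ two_neq0)/eqP; rewrite mulf_eq0 signr_eq0 orbF => /eqP.
exact: krylov_mul_ker free_j (krylov_coef_last0 a_max) aA0.
Qed.

Lemma krylov_anticomm (P : 'M[F]_n) j :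
  P *m x = x -> P *m A = - (A *m P) -> krylov j *m P^T = sgn_diag F j *m krylov j.
Proof.
move=> Px PA; have PAk k : P *m (A ^+ k *m x) = (-1) ^+ k *: (A ^+ k *m x).
  elim: k => [|k IHk]; first by rewrite expr0 !mul1mx scale1r.
  rewrite exprS -mulmxE -mulmxA mulmxA PA mulNmx -mulmxA IHk -scalemxAr.
  by rewrite exprS mulN1r scaleNr.
by apply/mul_diag_rowsP => k; rewrite rowK -trmx_mul PAk mxE linearZ.
Qed.

End Krylov.

Section IsotropicKernel.
Variables (F : fieldType) (m : nat) (A Q : 'M[F]_m.+1) (x z : 'cV[F]_m.+1).
Local Notation M := (krylov A x m.+1).
Local Notation K := (krylov A x m).
Hypotheses (A_skew : A^T = - A) (two_neq0 : (2 : F) != 0).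
Hypotheses (rank_M : (m <= \rank M)%N) (z_neq0 : z != 0).
Hypotheses (Mz0 : M *m z = 0) (zz0 : z^T *m z = 0).
Hypotheses (MQ : M *m Q = sgn_diag F m.+1 *m M).
Hypotheses (adjQ : \adj M^T *m Q = sgn_diag F m.+1 *m \adj M^T).

Let rank_M_eq : \rank M = m.
Proof. by apply/eqP; rewrite eqn_leq rank_M (mxrank_mul_cV0 z_neq0 Mz0). Qed.

Let K_free : row_free K.
Proof. by apply: (row_free_krylov (N := m.+1)); rewrite rank_M_eq. Qed.

Let rank_M_K : \rank M = \rank K.
Proof. by move/eqP: K_free => ->; rewrite rank_M_eq. Qed.

Let M_sub_K : (M <= K)%MS.
Proof. exact: krylov_stable rank_M_K _. Qed.

Let zT_sub_K : (z^T <= K)%MS.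
Proof. exact: submx_trans (isotropic_cV_sub z_neq0 rank_M_eq Mz0 zz0) M_sub_K. Qed.

Let ker_line (y : 'rV_m.+1) : y *m M^T = 0 -> (y <= z^T)%MS.
Proof.
apply: corank1_ker_sub; rewrite ?mxrank_tr ?rank_M_eq ?trmx_eq0 //.
by rewrite -trmx_mul Mz0 trmx0.
Qed.

Let vec_mulQ k : (k <= m)%N -> (A ^+ k *m x)^T *m Q = (-1) ^+ k *: (A ^+ k *m x)^T.
Proof.
rewrite -ltnS => lt_km; have := (mul_diag_rowsP _ _ _).1 MQ (Ordinal lt_km).
by rewrite rowK mxE.
Qed.

Let zT_mulQ : z^T *m Q = (-1) ^+ m *: z^T.
Proof.
(* The last row of adj M^T spans the left kernel of the singular M^T. *)
set y := row ord_max (\adj M^T).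
have y_neq0 : y != 0.
  by apply: adj_row_neq0; rewrite -tr_row' row'_krylov mxrank_tr; move/eqP: K_free.
have yQ : y *m Q = (-1) ^+ m *: y.
  by rewrite ((mul_diag_rowsP _ _ _).1 adjQ ord_max) mxE.
have yM : y *m M^T = 0.
  have : M^T \notin unitmx by rewrite -row_free_unit /row_free mxrank_tr rank_M_eq neq_ltn ltnSn.
  by rewrite unitmxE unitfE negbK -row_mul mul_adj_mx => /eqP->; rewrite raddf0 row0.
have /sub_rVP[mu y_mu] := ker_line yM.
have mu_neq0 : mu != 0 by apply: contraNneq y_neq0 => mu0; rewrite y_mu mu0 scale0r.
apply: (scalerI mu_neq0); rewrite scalemxAl -y_mu yQ y_mu.
by rewrite !scalerA mulrC.
Qed.

Lemma no_isotropic_krylov_kernel : False.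
Proof.
have KQ : K *m Q = sgn_diag F m *m K.
  apply/mul_diag_rowsP => k; rewrite rowK vec_mulQ ?mxE //; exact: ltnW.
have KAQ : K *m A^T *m Q = - (sgn_diag F m *m (K *m A^T)).
  rewrite -mulNmx -linearN; apply/mul_diag_rowsP => k.
  by rewrite row_mul rowK krylov_vecS vec_mulQ // !mxE exprS mulN1r.
have [a za] := submxP zT_sub_K.
have a_sgn : a *m sgn_diag F m = (-1) ^+ m *: a.
  by apply: (row_free_inj K_free); rewrite -mulmxA -KQ mulmxA -za zT_mulQ za scalemxAl.
(* y lies in the left kernel of M^T, but in the other eigenspace of Q. *)
set y := z^T *m A^T.
have yQ : y *m Q = - ((-1) ^+ m *: y).
  by rewrite /y za -!mulmxA (mulmxA K) KAQ mulmxN mulmxA a_sgn -scalemxAl !mulmxA.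
have yM : y *m M^T = 0.
  have /submxP[X MA] : (M *m A^T <= M)%MS.
    apply: submx_trans (krylov_mul _ _ _) _.
    exact: submx_trans (krylov_stable rank_M_K _) (krylov_subS _ _ _).
  have MA_neg : M *m A = - (X *m M) by rewrite -MA A_skew mulmxN opprK.
  apply: trmx_inj; rewrite /y trmx0 !trmx_mul !trmxK mulmxA MA_neg mulNmx.
  by rewrite -mulmxA Mz0 mulmx0 oppr0.
have y0 : y = 0.
  have /sub_rVP[nu y_nu] := ker_line yM.
  have : y *m Q = (-1) ^+ m *: y by rewrite y_nu -scalemxAl zT_mulQ !scalerA mulrC.
  by rewrite yQ => /esym/(eqNr_eq0 two_neq0)/eqP; rewrite scaler_eq0 signr_eq0 => /eqP.
have := krylov_sgn_mul_ker two_neq0 K_free a_sgn; rewrite -za -/y => /(_ y0) zT0.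
by move: z_neq0; rewrite -trmx_eq0 zT0 eqxx.
Qed.

End IsotropicKernel.

Section OrthogonalSkew.
Variables (F : fieldType) (n : nat) (S Q : 'M[F]_n) (e : 'cV[F]_n).
Hypotheses (Q_orth : Q^T *m Q = 1%:M) (Q_reg : Q *m e = e).
Hypothesis Q_skew : Q^T *m S *m Q = - S.

Let QQT : Q *m Q^T = 1%:M.
Proof. exact: mulmx1C. Qed.

Let QS : Q *m S = - (S *m Q).
Proof.
have : Q *m (Q^T *m S *m Q) = S *m Q by rewrite !mulmxA QQT mul1mx.
by rewrite Q_skew mulmxN => <-; rewrite opprK.
Qed.

Let QTS : Q^T *m S = - (S *m Q^T).
Proof.
have : Q^T *m (Q *m S) *m Q^T = S *m Q^T by rewrite mulmxA Q_orth mul1mx.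
by rewrite QS mulmxN mulNmx -!mulmxA QQT mulmx1 => <-; rewrite opprK.
Qed.

Let QTe : Q^T *m e = e.
Proof. by rewrite -{1}Q_reg mulmxA Q_orth mul1mx. Qed.

Lemma krylov_mul_orth : krylov S e n *m Q = sgn_diag F n *m krylov S e n.
Proof. by rewrite -[Q]trmxK krylov_anticomm. Qed.

Lemma adj_krylov_mul_orth : krylov S e n \in unitmx ->
  \adj (krylov S e n)^T *m Q = sgn_diag F n *m \adj (krylov S e n)^T.
Proof.
move=> unitK; apply: adj_conj; first by rewrite unitmx_tr.
have := congr1 trmx (krylov_anticomm n Q_reg QS).
by rewrite !trmx_mul trmxK tr_diag_mx.
Qed.

End OrthogonalSkew.

Section RationalOrthogonal.
Variables (n : nat) (S : 'M[int]_n) (Q : 'M[rat]_n).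
Hypotheses (Q_orth : orthogonal_mx Q) (Q_reg : regular_mx Q).
Hypothesis Q_skew : Q^T *m ratmx S *m Q = ratmx (- S).
Local Notation M := (krylov S (onev int n) n).

Let Q_skew_rat : Q^T *m ratmx S *m Q = - ratmx S.
Proof. by rewrite Q_skew; exact: map_mxN. Qed.

Let M_rat : map_mx intr M = krylov (ratmx S) (onev rat n) n.
Proof. by rewrite map_krylov map_onev. Qed.

Lemma ratmx_krylov_mul_orth : ratmx M *m Q = ratmx (sgn_diag int n *m M).
Proof. by rewrite /ratmx map_mxM map_sgn_diag !M_rat; apply: krylov_mul_orth. Qed.

Lemma ratmx_adj_krylov_mul_orth :
  \det M != 0 -> ratmx (\adj M^T) *m Q = ratmx (sgn_diag int n *m \adj M^T).
Proof.
move=> detM_neq0; rewrite /ratmx map_mxM map_sgn_diag !map_mx_adj -!map_trmx !M_rat.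
apply: adj_krylov_mul_orth => //.
by rewrite -M_rat unitmxE unitfE det_map_mx /= intr_eq0.
Qed.

End RationalOrthogonal.

Lemma walkmx_krylov n (S : 'M[int]_n) : (walkmx S)^T = krylov S (onev int n) n.
Proof. by apply/matrixP => k i; rewrite !mxE. Qed.

Lemma skewadj_tr n (arc : rel 'I_n) : (skewadj arc)^T = - skewadj arc.
Proof. by apply/matrixP => i j; rewrite !mxE opprB. Qed.

Lemma integral_mx_lift n (B : 'M[rat]_n) : integral_mx B -> exists Bi, ratmx Bi = B.
Proof.
move=> B_int; exists (\matrix_(i, j) Num.floor (B i j)).
by apply/matrixP => i j; rewrite !mxE floorK ?B_int.
Qed.

Lemma map_mx_mul_level (F : fieldType) n (Q : 'M[rat]_n) l (Ql A C : 'M[int]_n) :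
  ratmx Ql = l%:R *: Q -> (l%:R : F) != 0 -> ratmx A *m Q = ratmx C ->
  map_mx intr A *m ((l%:R)^-1 *: map_mx intr Ql) = map_mx intr C :> 'M[F]_n.
Proof.
move=> Ql_eq l_neq0 AQ; have AQl : A *m Ql = l%:Z *: C.
  have : ratmx (A *m Ql) = ratmx (l%:Z *: C).
    rewrite [LHS]map_mxM [RHS]map_mxZ -[map_mx _ Ql]/(ratmx Ql) Ql_eq -scalemxAr.
    by rewrite -[map_mx _ A]/(ratmx A) AQ pmulrn.
  move/matrixP => AQl_rat; apply/matrixP => i j; apply: (@intr_inj rat).
  by have := AQl_rat i j; rewrite !mxE.
by rewrite -scalemxAr -map_mxM AQl map_mxZ scalerA /= pmulrn mulVf // scale1r.
Qed.

Lemma sq_dvdz_det_rows n (X : 'M[int]_n) (d : int) i1 i2 : i1 != i2 ->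
  (forall j, (d %| X i1 j)%Z) -> (forall j, (d %| X i2 j)%Z) -> (d ^+ 2 %| \det X)%Z.
Proof.
move=> neq12 dvd1 dvd2; pose P i := (i == i1) || (i == i2).
pose Y := \matrix_(i, j) if P i then (X i j %/ d)%Z else X i j.
have -> : X = diag_mx (\row_i (if P i then d else 1)) *m Y.
  apply/matrixP => i j; rewrite mul_diag_mx !mxE.
  by case: ifP => [/orP[]/eqP-> | _]; rewrite ?mul1r // mulrC divzK.
rewrite det_mulmx det_diag (bigD1 i1) // (bigD1 i2) 1?eq_sym //= big1.
  by rewrite !mxE /P !eqxx orbT mulr1 /= -expr2 dvdz_mulr.
by move=> i /andP[/negbTE ne1 /negbTE ne2]; rewrite mxE /P ne1 ne2.
Qed.

Section ModularRank.
Variable p : nat.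
Hypothesis p_prime : prime p.
Local Notation modp A := (map_mx (intr : int -> 'F_p) A).

Lemma modp_mx_eq0 m n (A : 'M[int]_(m, n)) :
  reflect (forall i j, (p%:Z %| A i j)%Z) (modp A == 0).
Proof.
have dvdp x : (p%:Z %| x)%Z = (x%:~R == 0 :> 'F_p) by apply: dvdz_pcharf; apply: pchar_Fp.
apply: (iffP eqP) => [A0 i j | dvdA].
  by move/matrixP/(_ i j): A0; rewrite !mxE dvdp => ->.
by apply/matrixP => i j; rewrite !mxE; apply/eqP; rewrite -dvdp.
Qed.

Lemma rank_modp_det n (A : 'M[int]_n) :
  ~~ ((p%:Z) ^+ 2 %| \det A)%Z -> (n.-1 <= \rank (modp A))%N.
Proof.
apply: contraR; rewrite -ltnNge; case: n A => [|[|n]] A // lt_rank.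
(* For Li an integral lift of the inverse of col_ebase, unimodular mod p, the
   rows of Li A beyond the rank vanish mod p; two of them give p^2. *)
have := mulmx_ebase (modp A); set L := col_ebase _; set U := row_ebase _; set r := \rank _.
move=> LrU; pose Li : 'M[int]_n.+2 := \matrix_(i, j) (invmx L i j : nat)%:Z.
have Li_mod : modp Li = invmx L by apply/matrixP => i j; rewrite !mxE -pmulrn natr_Zp.
have LiA : modp (Li *m A) = pid_mx r *m U.
  by rewrite map_mxM Li_mod -LrU !mulmxA mulVmx ?col_ebase_unit // mul1mx.
have dvd_row (i : 'I_n.+2) : (r <= i)%N -> forall j, (p%:Z %| (Li *m A) i j)%Z.
  move=> le_ri j; rewrite (dvdz_pcharf (pchar_Fp p_prime)).
  move/matrixP/(_ i j): LiA; rewrite !mxE => ->.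
  by rewrite big1 // => k _; rewrite mxE ltnNge le_ri andbF mul0r.
have : ((p%:Z) ^+ 2 %| \det (Li *m A))%Z.
  apply: (@sq_dvdz_det_rows _ _ _ ord_max (inord n)); last 2 first.
  - by apply: dvd_row; rewrite /=; lia.
  - by apply: dvd_row; rewrite /= inordK //; lia.
  by apply/eqP => /(congr1 val); rewrite /= inordK //; lia.
have Li_unit : ~~ (p%:Z %| \det Li)%Z.
  rewrite (dvdz_pcharf (pchar_Fp p_prime)) -det_map_mx Li_mod -unitfE -unitmxE.
  by rewrite unitmx_inv col_ebase_unit.
by rewrite det_mulmx Gauss_dvdzr // coprimez_pexpl // coprimezE prime_coprime.
Qed.

End ModularRank.

Lemma squarefree_nat_ndvd_sq m p : squarefree_nat m -> prime p -> (0 < m)%N -> ~~ (p ^ 2 %| m)%N.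
Proof.
move=> /forallP sqf_m p_prime m_gt0; apply/negP => sq_dvd.
have lt_pm : (p < m.+1)%N.
  by rewrite ltnS (dvdn_leq m_gt0) // (dvdn_trans _ sq_dvd) // dvdn_exp.
by have := sqf_m (Ordinal lt_pm); rewrite /= p_prime sq_dvd.
Qed.

Lemma in_Gn_det n (arc : rel 'I_n) p : in_Gn arc -> prime p -> odd p ->
  \det (walkmx (skewadj arc)) != 0 /\ ~~ ((p%:Z) ^+ 2 %| \det (walkmx (skewadj arc)))%Z.
Proof.
case=> m [-> [odd_m sqf_m]] p_prime p_odd.
have m_neq0 : m != 0 by apply: contraTneq odd_m => ->.
split; first by rewrite mulf_neq0 // expf_neq0.
rewrite Gauss_dvdzr; last first.
  rewrite coprimezXl // coprimezXr // coprimezE /= prime_coprime //.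
  by rewrite dvdn_prime2 //; apply: contraTneq p_odd => ->.
by rewrite /dvdz abszX squarefree_nat_ndvd_sq // absz_gt0.
Qed.

Theorem lemma3p9 (n : nat) (arc : rel 'I_n) (Q0 : 'M[rat]_n) (l0 p : nat)
  (z : 'cV[int]_n) :
  oriented_graph arc ->
  in_Gn arc ->
  orthogonal_mx Q0 -> regular_mx Q0 ->
  Q0^T *m ratmx (skewadj arc) *m Q0 = ratmx (- skewadj arc) ->
  is_level Q0 l0 ->
  prime p -> odd p -> ~~ (p %| l0)%N ->
  (exists i, ~~ (p%:Z %| z i ord0)%Z) ->
  (forall k, (p%:Z %| ((walkmx (skewadj arc))^T *m z) k ord0)%Z) ->
  ~~ (p%:Z %| (z^T *m z) ord0 ord0)%Z.
Proof.
case: n arc Q0 z => [|m] arc Q0 z; first by move=> _ _ _ _ _ _ _ _ _ [[]].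
move=> _ G_arc Q_orth Q_reg Q_skew [_ [Q_int _]] p_prime p_odd p_l0 [i z_i] Wz.
have [detW_neq0 detW_sq] := in_Gn_det G_arc p_prime p_odd.
rewrite -det_tr walkmx_krylov in detW_sq detW_neq0; rewrite walkmx_krylov in Wz.
set S := skewadj arc in Q_skew detW_neq0 detW_sq Wz.
set M := krylov S _ _ in detW_neq0 detW_sq Wz.
have [Ql Ql_eq] := integral_mx_lift Q_int.
have l0_neq0 : (l0%:R : 'F_p) != 0 by rewrite -(dvdn_pcharf (pchar_Fp p_prime)).
have two_neq0 : (2 : 'F_p) != 0.
  rewrite -(dvdn_pcharf (pchar_Fp p_prime)) dvdn_prime2 //.
  by apply: contraTneq p_odd => ->.
have MQ := map_mx_mul_level Ql_eq l0_neq0 (ratmx_krylov_mul_orth Q_orth Q_reg Q_skew).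
have adjQ := map_mx_mul_level Ql_eq l0_neq0
  (ratmx_adj_krylov_mul_orth Q_orth Q_reg Q_skew detW_neq0).
apply/negP => zz; apply: (@no_isotropic_krylov_kernel 'F_p _ (map_mx intr S)
  ((l0%:R)^-1 *: map_mx intr Ql) (map_mx intr (onev int m.+1)) (map_mx intr z)).
all: rewrite -?map_krylov -/M.
- by rewrite map_trmx skewadj_tr map_mxN.
- exact: two_neq0.
- exact: rank_modp_det.
- by apply/negP => /(modp_mx_eq0 p_prime)/(_ i ord0); apply/negP.
- by rewrite -map_mxM; apply/eqP/modp_mx_eq0 => // k j; rewrite ord1.
- by rewrite map_trmx -map_mxM; apply/eqP/modp_mx_eq0 => // k j; rewrite !ord1.
- by rewrite MQ map_mxM map_sgn_diag.
- by rewrite map_trmx -map_mx_adj adjQ map_mxM map_sgn_diag.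
Qed.
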